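(* Let $\mathcal{E}\in\mathbb{R}^{N_1\times N_2\times N_3}$ be any tensor with at most $\mathrm{deg}_{max}(\mathcal{E})$ nonzero entries per horizontal/lateral slice and at least $\mathrm{deg}_{min}(\mathcal{E})$ nonzero entries per horizontal/lateral slice. Then $$\mathrm{deg}_{min}(\mathcal{E})\le\mu(\mathcal{E})\le\mathrm{deg}_{max}(\mathcal{E}).$$
   Context: Horizontal slices of $\mathcal{E}$ are $\mathcal{E}(i,:,:)$, $1\le i\le N_1$, and lateral slices are $\mathcal{E}(:,j,:)$, $1\le j\le N_2$. For $\mathcal{A}\in\mathbb{R}^{N_1\times N_2\times N_3}$ with frontal slices $A^{(k)}=\mathcal{A}(:,:,k)$, $\mathrm{bcirc}(\mathcal{A})\in\mathbb{R}^{N_1N_3\times N_2N_3}$ is the block circulant matrix whose $(i,j)$ block is $A^{(((i-j)\bmod N_3)+1)}$, and the tensor spectral norm is $\|\mathcal{A}\|=\|\mathrm{bcirc}(\mathcal{A})\|$ (largest singular value). $\|\mathcal{A}\|_\infty$ is the maximum absolute entry. $\Omega(\mathcal{E})=\{\mathcal{N}\in\mathbb{R}^{N_1\times N_2\times N_3}:\mathrm{support}(\mathcal{N})\subseteq\mathrm{support}(\mathcal{E})\}$, support being the set of indices of nonzero entries, and $\mu(\mathcal{E})=\max_{\mathcal{N}\in\Omega(\mathcal{E}),\|\mathcal{N}\|_\infty\le1}\|\mathcal{N}\|$. *)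

From HB Require Import structures.
From mathcomp Require Import all_boot all_order all_algebra.
From mathcomp Require Import classical_sets reals.
Set Implicit Arguments. Unset Strict Implicit. Unset Printing Implicit Defensive.
Import Order.TTheory GRing.Theory Num.Theory.
Local Open Scope ring_scope.
Local Open Scope classical_set_scope.

Definition tensor (R : Type) (N1 N2 N3 : nat) := 'I_N1 -> 'I_N2 -> 'I_N3 -> R.

Definition frontal (R : Type) N1 N2 N3 (A : tensor R N1 N2 N3) (k : 'I_N3)
  : 'M[R]_(N1, N2) := \matrix_(i, j) A i j k.

(* 0-based version of the index ((i - j) mod N3) + 1 *)
Definition circ_idx (n : nat) (i j : 'I_n) : 'I_n :=
  Ordinal (ltn_pmod ((i + n) - j)%N (leq_ltn_trans (leq0n i) (ltn_ord i))).

(* bcirc(A): N3 x N3 block matrix whose (i,j) block is A^(((i-j) mod N3)+1);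
   size (N1*N3) x (N2*N3), written as sums of the block sizes. *)
Definition bcirc (R : Type) N1 N2 N3 (A : tensor R N1 N2 N3)
  : 'M[R]_(\sum_(i < N3) N1, \sum_(j < N3) N2) :=
  \mxblock_(i < N3, j < N3) frontal A (circ_idx i j).

Definition vnorm2 (R : realType) n (x : 'cV[R]_n) : R :=
  Num.sqrt (\sum_(i < n) x i 0 ^+ 2).

(* Spectral norm (largest singular value) = operator 2-norm. *)
Definition specnorm (R : realType) m n (M : 'M[R]_(m, n)) : R :=
  sup [set vnorm2 (M *m x) | x in [set x : 'cV[R]_n | vnorm2 x <= 1]].

Definition tnorm (R : realType) N1 N2 N3 (A : tensor R N1 N2 N3) : R :=
  specnorm (bcirc A).

Definition in_Omega (R : realType) N1 N2 N3 (E N : tensor R N1 N2 N3) : Prop :=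
  forall i j k, N i j k != 0 -> E i j k != 0.

Definition inf_norm_le1 (R : realType) N1 N2 N3 (N : tensor R N1 N2 N3) : Prop :=
  forall i j k, `|N i j k| <= 1.

Definition mu (R : realType) N1 N2 N3 (E : tensor R N1 N2 N3) : R :=
  sup [set tnorm N | N in [set N | in_Omega E N /\ inf_norm_le1 N]].

Definition nnz_horiz (R : realType) N1 N2 N3 (E : tensor R N1 N2 N3) (i : 'I_N1) : nat :=
  #|[set jk : 'I_N2 * 'I_N3 | E i jk.1 jk.2 != 0]|.

Definition nnz_lat (R : realType) N1 N2 N3 (E : tensor R N1 N2 N3) (j : 'I_N2) : nat :=
  #|[set ik : 'I_N1 * 'I_N3 | E ik.1 j ik.2 != 0]|.

From mathcomp Require Import all_boot all_order all_algebra.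
From mathcomp Require Import classical_sets reals.
From mathcomp Require Import ring.
Set Implicit Arguments. Unset Strict Implicit. Unset Printing Implicit Defensive.
Import Order.TTheory GRing.Theory Num.Theory.
Local Open Scope ring_scope.

(* Both bounds are read off bcirc N, whose rows and columns are, up to a cyclic
   relabelling of the frontal index, the horizontal and lateral slices of N.
   If N is supported in E with entries of modulus at most 1, every row and
   column of bcirc N has absolute sum at most deg_max, and the Schur test (a
   weighted Cauchy-Schwarz inequality) bounds its spectral norm by deg_max.
   Conversely the 0/1 indicator of the support of E is admissible and all its
   line sums are at least deg_min: for the normalised all-ones vector u,
   |bcirc u|^2 = (1/n) sum_i r_i^2 >= (1/n) deg_min sum_i r_i >= deg_min^2,
   where r_i are the row sums and n is the number of columns. *)

Lemma weighted_sum_sqr_le (R : realDomainType) (I : finType) (w y : I -> R) :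
  (forall i, 0 <= w i) ->
  (\sum_i w i * y i) ^+ 2 <= (\sum_i w i) * \sum_i w i * y i ^+ 2.
Proof.
move=> w_ge0.
set S := \sum_i w i; set A := \sum_i w i * y i; set B := \sum_i w i * y i ^+ 2.
have lagrange : 2 * (S * B - A ^+ 2) = \sum_i \sum_j w i * w j * (y i - y j) ^+ 2.
  transitivity (\sum_i \sum_j (w j * (w i * y i ^+ 2) + w i * (w j * y j ^+ 2)
                              - 2 * ((w i * y i) * (w j * y j)))); last first.
    by apply: eq_bigr => i _; apply: eq_bigr => j _; ring.
  under eq_bigr do rewrite sumrB big_split /= -mulr_suml -!mulr_sumr.
  rewrite -/S -/A -/B sumrB big_split /= -!mulr_sumr -!mulr_suml.
  by rewrite -/S -/A -/B; ring.
rewrite -subr_ge0 -(pmulr_rge0 _ (ltr0Sn _ 1)) lagrange.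
apply: sumr_ge0 => i _; apply: sumr_ge0 => j _.
by rewrite mulr_ge0 ?sqr_ge0 ?mulr_ge0 ?w_ge0.
Qed.

Section SpectralNorm.
Variables (R : realType) (m n : nat).
Implicit Types (M : 'M[R]_(m, n)) (x : 'cV[R]_n).

Lemma vnorm2_ge0 k (v : 'cV[R]_k) : 0 <= vnorm2 v.
Proof. exact: sqrtr_ge0. Qed.

Lemma vnorm2_ge k (v : 'cV[R]_k) (a : R) :
  0 <= a -> a ^+ 2 <= \sum_i v i 0 ^+ 2 -> a <= vnorm2 v.
Proof.
move=> a_ge0 le_a; rewrite -(ger0_norm a_ge0) -sqrtr_sqr ler_sqrt //.
by apply: sumr_ge0 => i _; rewrite sqr_ge0.
Qed.

Lemma vnorm2_le k (v : 'cV[R]_k) (a : R) :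
  0 <= a -> \sum_i v i 0 ^+ 2 <= a ^+ 2 -> vnorm2 v <= a.
Proof.
by move=> a_ge0 le_a; rewrite -(ger0_norm a_ge0) -sqrtr_sqr ler_sqrt // sqr_ge0.
Qed.

Lemma vnorm2_sqr k (v : 'cV[R]_k) : vnorm2 v ^+ 2 = \sum_i v i 0 ^+ 2.
Proof. by rewrite sqr_sqrtr // sumr_ge0 // => i _; rewrite sqr_ge0. Qed.

Lemma schur_test M (a : R) :
  0 <= a -> (forall i, \sum_j `|M i j| <= a) -> (forall j, \sum_i `|M i j| <= a) ->
  forall x, vnorm2 (M *m x) <= a * vnorm2 x.
Proof.
move=> a_ge0 row_le col_le x.
have row_sqr_le i : (M *m x) i 0 ^+ 2 <= a * \sum_j `|M i j| * x j 0 ^+ 2.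
  have norm_le : `|(M *m x) i 0| <= \sum_j `|M i j| * `|x j 0|.
    rewrite mxE (le_trans (ler_norm_sum _ _ _)) //.
    by apply: ler_sum => j _; rewrite normrM.
  rewrite -real_normK ?num_real // (le_trans (lerXn2r 2 _ _ norm_le)) ?nnegrE //.
    by apply: sumr_ge0 => j _; rewrite mulr_ge0.
  rewrite (le_trans (weighted_sum_sqr_le _ (fun j => normr_ge0 (M i j)))) //.
  have -> : \sum_j `|M i j| * `|x j 0| ^+ 2 = \sum_j `|M i j| * x j 0 ^+ 2.
    by apply: eq_bigr => j _; rewrite real_normK ?num_real.
  rewrite ler_wpM2r ?row_le //.
  by rewrite sumr_ge0 // => j _; rewrite mulr_ge0 ?sqr_ge0.
apply: vnorm2_le; first by rewrite mulr_ge0 ?vnorm2_ge0.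
rewrite (le_trans (ler_sum _ (fun i _ => row_sqr_le i))) //.
rewrite -mulr_sumr exchange_big /= exprMn vnorm2_sqr expr2 -mulrA ler_wpM2l //.
rewrite mulr_sumr; apply: ler_sum => j _.
by rewrite -mulr_suml ler_wpM2r ?sqr_ge0.
Qed.

Lemma vnorm2_0 k : vnorm2 (0 : 'cV[R]_k) = 0.
Proof. by rewrite /vnorm2 big1 ?sqrtr0 // => i _; rewrite mxE expr0n. Qed.

Lemma specnorm_le M (a : R) :
  0 <= a -> (forall i, \sum_j `|M i j| <= a) -> (forall j, \sum_i `|M i j| <= a) ->
  specnorm M <= a.
Proof.
move=> a_ge0 row_le col_le; apply: ge_sup.
  by exists (vnorm2 (M *m 0)), 0 => //=; rewrite vnorm2_0 ler01.
move=> _ [x x_le1 <-].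
by rewrite (le_trans (schur_test a_ge0 row_le col_le x)) // ler_piMr.
Qed.

Lemma specnorm_ge M x : vnorm2 x <= 1 -> vnorm2 (M *m x) <= specnorm M.
Proof.
move=> x_le1; apply: ub_le_sup; last by exists x.
set a := \sum_i \sum_j `|M i j|.
have row_ge0 i : 0 <= \sum_j `|M i j| by apply: sumr_ge0 => j _.
have a_ge0 : 0 <= a by apply: sumr_ge0 => i _.
have row_le i : \sum_j `|M i j| <= a.
  by rewrite /a (bigD1 i) //= lerDl; apply: sumr_ge0 => i' _.
have col_le j : \sum_i `|M i j| <= a.
  by apply: ler_sum => i _; rewrite (bigD1 j) //= lerDl; apply: sumr_ge0 => j' _.
exists a => _ [y y_le1 <-].
by rewrite (le_trans (schur_test a_ge0 row_le col_le y)) // ler_piMr.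
Qed.

Lemma line_sum_le_specnorm M (d : R) :
  (0 < n)%N -> 0 <= d ->
  (forall i, d <= \sum_j M i j) -> (forall j, d <= \sum_i M i j) -> d <= specnorm M.
Proof.
move=> n_gt0 d_ge0 row_ge col_ge.
pose c := (Num.sqrt n%:R)^-1 : R.
have c2 : c ^+ 2 = n%:R^-1 by rewrite exprVn sqr_sqrtr ?ler0n.
have c_norm : vnorm2 (const_mx c : 'cV_n) <= 1.
  rewrite /vnorm2 (eq_bigr (fun _ => c ^+ 2)) => [|j _]; last by rewrite mxE.
  by rewrite sumr_const card_ord -mulr_natl c2 mulfV ?sqrtr1 // pnatr_eq0 -lt0n.
apply: (le_trans _ (specnorm_ge M c_norm)); apply: vnorm2_ge => //.
have -> : \sum_i (M *m (const_mx c : 'cV_n)) i 0 ^+ 2 = c ^+ 2 * \sum_i (\sum_j M i j) ^+ 2.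
  rewrite mulr_sumr; apply: eq_bigr => i _; rewrite -exprMn mxE mulr_sumr.
  by congr (_ ^+ 2); apply: eq_bigr => j _; rewrite mxE mulrC.
have total_ge : n%:R * d ^+ 2 <= \sum_i (\sum_j M i j) ^+ 2.
  apply: (@le_trans _ _ (d * \sum_i \sum_j M i j)).
    rewrite exchange_big mulr_sumr -[X in X%:R](card_ord n) mulr_natl -sumr_const.
    by apply: ler_sum => j _; rewrite expr2 ler_wpM2l.
  rewrite mulr_sumr; apply: ler_sum => i _.
  by rewrite expr2 ler_wpM2r // (le_trans d_ge0 (row_ge i)).
rewrite (le_trans _ (ler_wpM2l (sqr_ge0 c) total_ge)) // c2 mulrA mulVf ?mul1r //.
by rewrite pnatr_eq0 -lt0n.
Qed.

End SpectralNorm.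

Section BlockCirculant.
Variables (R : realType) (N1 N2 N3 : nat).
Implicit Types (A : tensor R N1 N2 N3).

Lemma circ_idxD n (i j : 'I_n) : (circ_idx i j + j = i %[mod n])%N.
Proof.
rewrite /circ_idx /= modnDml subnK ?modnDr //.
exact: leq_trans (ltnW (ltn_ord j)) (leq_addl _ _).
Qed.

Lemma circ_idx_injl n (j : 'I_n) : injective (fun i => circ_idx i j).
Proof.
move=> i1 i2 eq_i; apply: val_inj => /=.
by rewrite -(modn_small (ltn_ord i1)) -(modn_small (ltn_ord i2)) -!(circ_idxD _ j) eq_i.
Qed.

Lemma circ_idx_injr n (i : 'I_n) : injective (circ_idx i).
Proof.
move=> j1 j2 eq_j; apply: val_inj => /=; apply/eqP.
rewrite -(modn_small (ltn_ord j1)) -(modn_small (ltn_ord j2)) -(eqn_modDl (circ_idx i j1)).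
by rewrite {2}eq_j !circ_idxD.
Qed.

Lemma sum_block_index (V : nmodType) p q (F : 'I_p -> 'I_q -> V) :
  \sum_(s < \sum_(i < p) q) F (tagnat.sig1 s) (tagnat.sig2 s) = \sum_i \sum_j F i j.
Proof. by rewrite sig_big_dep (reindex _ tagnat.sig_bij_on). Qed.

Lemma bcircE A s t :
  bcirc A s t =
  A (tagnat.sig2 s) (tagnat.sig2 t) (circ_idx (tagnat.sig1 s) (tagnat.sig1 t)).
Proof. by rewrite !mxE. Qed.

Lemma bcirc_row_sum A (f : R -> R) s :
  \sum_t f (bcirc A s t) = \sum_j \sum_k f (A (tagnat.sig2 s) j k).
Proof.
under eq_bigr do rewrite bcircE.
rewrite (sum_block_index (fun k j => f (A (tagnat.sig2 s) j (circ_idx (tagnat.sig1 s) k)))).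
rewrite exchange_big; apply: eq_bigr => j _.
by rewrite [RHS](reindex_inj (circ_idx_injr (i := tagnat.sig1 s))).
Qed.

Lemma bcirc_col_sum A (f : R -> R) t :
  \sum_s f (bcirc A s t) = \sum_i \sum_k f (A i (tagnat.sig2 t) k).
Proof.
under eq_bigr do rewrite bcircE.
rewrite (sum_block_index (fun k i => f (A i (tagnat.sig2 t) (circ_idx k (tagnat.sig1 t))))).
rewrite exchange_big; apply: eq_bigr => i _.
by rewrite [RHS](reindex_inj (circ_idx_injl (j := tagnat.sig1 t))).
Qed.

End BlockCirculant.

Lemma in_set_predE (T : Type) (P : pred T) x : (x \in [set y | P y]%classic) = P x.
Proof. by apply/idP/idP; rewrite in_setE. Qed.

Section Support.
Variables (R : realType) (N1 N2 N3 : nat) (E : tensor R N1 N2 N3).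

Definition support_indicator : tensor R N1 N2 N3 := fun i j k => (E i j k != 0)%:R.

Lemma support_indicator_in_Omega : in_Omega E support_indicator.
Proof. by move=> i j k; rewrite /support_indicator; case: (E i j k != 0); rewrite ?eqxx. Qed.

Lemma support_indicator_inf_norm_le1 : inf_norm_le1 support_indicator.
Proof.
by move=> i j k; rewrite /support_indicator; case: (E i j k != 0); rewrite ?normr1 ?normr0.
Qed.

Lemma norm_le_support_indicator N :
  in_Omega E N -> inf_norm_le1 N -> forall i j k, `|N i j k| <= support_indicator i j k.
Proof.
move=> N_Omega N_le1 i j k; rewrite /support_indicator.
have [E0|] := eqVneq (E i j k) 0; last by move=> _; exact: N_le1.
have /eqP -> : N i j k == 0 by apply/negPn/negP => /N_Omega; rewrite E0 eqxx.
by rewrite normr0.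
Qed.

Lemma nnz_horiz_sum i : (nnz_horiz E i)%:R = \sum_j \sum_k support_indicator i j k.
Proof.
rewrite /nnz_horiz -sum1_card natr_sum big_mkcond pair_big /=.
by apply: eq_bigr => -[j k] _; rewrite in_set_predE /support_indicator; case: (E i j k != 0).
Qed.

Lemma nnz_lat_sum j : (nnz_lat E j)%:R = \sum_i \sum_k support_indicator i j k.
Proof.
rewrite /nnz_lat -sum1_card natr_sum big_mkcond pair_big /=.
by apply: eq_bigr => -[i k] _; rewrite in_set_predE /support_indicator; case: (E i j k != 0).
Qed.

Lemma nnz_horiz_le i : (nnz_horiz E i <= N2 * N3)%N.
Proof. by rewrite /nnz_horiz (leq_trans (max_card _)) // card_prod !card_ord. Qed.

Lemma nnz_lat_le j : (nnz_lat E j <= N1 * N3)%N.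
Proof. by rewrite /nnz_lat (leq_trans (max_card _)) // card_prod !card_ord. Qed.

Section Degree.
Variable dmax : nat.
Hypothesis deg_horiz_le : forall i, (nnz_horiz E i <= dmax)%N.
Hypothesis deg_lat_le : forall j, (nnz_lat E j <= dmax)%N.

Lemma tnorm_le_deg N : in_Omega E N -> inf_norm_le1 N -> tnorm N <= dmax%:R.
Proof.
move=> N_Omega N_le1; apply: specnorm_le => [|s|t]; first exact: ler0n.
- rewrite bcirc_row_sum (@le_trans _ _ (nnz_horiz E (tagnat.sig2 s))%:R) ?ler_nat //.
  rewrite nnz_horiz_sum; apply: ler_sum => j _; apply: ler_sum => k _.
  exact: norm_le_support_indicator.
- rewrite bcirc_col_sum (@le_trans _ _ (nnz_lat E (tagnat.sig2 t))%:R) ?ler_nat //.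
  rewrite nnz_lat_sum; apply: ler_sum => i _; apply: ler_sum => k _.
  exact: norm_le_support_indicator.
Qed.

Lemma mu_le_deg : mu E <= dmax%:R.
Proof.
apply: ge_sup.
  exists (tnorm support_indicator), support_indicator => //.
  by split; [exact: support_indicator_in_Omega | exact: support_indicator_inf_norm_le1].
by move=> _ [N [N_Omega N_le1] <-]; exact: tnorm_le_deg.
Qed.

End Degree.

Lemma tnorm_le_mu N : in_Omega E N -> inf_norm_le1 N -> tnorm N <= mu E.
Proof.
move=> N_Omega N_le1; apply: ub_le_sup; last by exists N.
exists (maxn (N2 * N3) (N1 * N3))%:R => _ [N' [N'_Omega N'_le1] <-].
apply: tnorm_le_deg N'_Omega N'_le1 => [i|j].
- exact: leq_trans (nnz_horiz_le i) (leq_maxl _ _).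
- exact: leq_trans (nnz_lat_le j) (leq_maxr _ _).
Qed.

Lemma deg_le_tnorm_support_indicator dmin :
  (0 < N2)%N -> (0 < N3)%N ->
  (forall i, dmin <= nnz_horiz E i)%N -> (forall j, dmin <= nnz_lat E j)%N ->
  dmin%:R <= tnorm support_indicator.
Proof.
move=> N2_gt0 N3_gt0 deg_horiz_ge deg_lat_ge; apply: line_sum_le_specnorm => [||s|t].
- by rewrite sum_nat_const card_ord muln_gt0 N3_gt0.
- exact: ler0n.
- by rewrite (bcirc_row_sum _ id) -nnz_horiz_sum ler_nat.
- by rewrite (bcirc_col_sum _ id) -nnz_lat_sum ler_nat.
Qed.

End Support.

Unset Implicit Arguments.

Theorem lemma4 (R : realType) (N1 N2 N3 : nat)
  (hN1 : (0 < N1)%N) (hN2 : (0 < N2)%N) (hN3 : (0 < N3)%N)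
  (E : tensor R N1 N2 N3) (deg_min deg_max : nat)
  (hmax_h : forall i : 'I_N1, (nnz_horiz E i <= deg_max)%N)
  (hmax_l : forall j : 'I_N2, (nnz_lat E j <= deg_max)%N)
  (hmin_h : forall i : 'I_N1, (deg_min <= nnz_horiz E i)%N)
  (hmin_l : forall j : 'I_N2, (deg_min <= nnz_lat E j)%N) :
  deg_min%:R <= mu E /\ mu E <= deg_max%:R.
Proof.
(* [hN1] is unused: the test vector of the lower bound only needs bcirc to have a column. *)
split; last exact: mu_le_deg.
apply: (le_trans (deg_le_tnorm_support_indicator hN2 hN3 hmin_h hmin_l)).
by apply: tnorm_le_mu; [exact: support_indicator_in_Omega | exact: support_indicator_inf_norm_le1].
Qed.
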